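(* Let $D$ be an infinite alphabet. A language $L$ of finite words over $D$ is recognised by some (original) two-way $k$-register automaton for some $k$ if and only if it is recognised by some modified two-way $k'$-register automaton for some $k'$. That is, the original and the modified models of two-way register automata over an infinite alphabet have the same recognising power.
   Context: An (original) non-deterministic two-way $k$-register automaton over an infinite alphabet $D$ is a tuple $(Q,q_0,F,\tau_0,P)$ where $Q$ is a finite set of states, $q_0\in Q$ is the initial state, $F\subseteq Q$ is the set of final states, $\tau_0:\{1,\dots,k\}\to D\cup\{\triangleright,\triangleleft\}$ is the initial register assignment, and $P$ is a finite set of transitions of the forms: (1) $(i,q)\to(q',d)$: if the current state is $q$ and the observed symbol equals the value in register $i$, enter state $q'$ and move in direction $d$; (2) $q\to(q',i,d)$: if the current state is $q$ and the observed symbol is different from all values held in the registers, enter state $q'$, copy the current symbol into register $i$, and move in direction $d$. Here $i\in\{1,\dots,k\}$, $q,q'\in Q$, $d\in\{\mathrm{stay},\mathrm{left},\mathrm{right}\}$. The input word is written on a read-only tape delimited by $\triangleright$ and $\triangleleft$; the automaton starts in $q_0$ at the first letter, applies non-deterministically any applicable transitions, and accepts if it can ever reach a state in $F$; the recognised language is the set of accepted words. A modified two-way $k$-register automaton additionally allows transitions of the forms: (3) $(i,q)\to(q',j,d)$: if the current state is $q$ and the observed symbol equals the value in register $i$, enter $q'$, copy the current symbol into register $j$ and move in direction $d$; (4) $q\to(q',d)$: if the current state is $q$ and the observed symbol is different from all register values, enter $q'$ and move in direction $d$ (without storing). In particular, in the modified model the same value may be held in several registers. *)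

From Stdlib Require Import Relations List.
From mathcomp Require Import all_boot.

Set Implicit Arguments.
Unset Strict Implicit.
Unset Printing Implicit Defensive.

Definition infinite_alphabet (D : Type) : Prop :=
  forall (n : nat) (f : 'I_n -> D), exists x : D, forall i, f i <> x.

Inductive tsym (D : Type) : Type :=
  | Sym of D
  | LEnd
  | REnd.
Arguments LEnd {D}.
Arguments REnd {D}.

Inductive dir : Type := Stay | Left | Right.

(* TEq i q q' d      : (i,q) -> (q',d)        (type 1)
   TNew q q' i d     : q -> (q',i,d)          (type 2)
   TEqStore i q q' j d : (i,q) -> (q',j,d)    (type 3, modified model only)
   TNewSkip q q' d   : q -> (q',d)            (type 4, modified model only) *)
Inductive trans (k : nat) (Q : Type) : Type :=
  | TEq of 'I_k & Q & Q & dir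
  | TNew of Q & Q & 'I_k & dir
  | TEqStore of 'I_k & Q & Q & 'I_k & dir
  | TNewSkip of Q & Q & dir.

Record RA (D : Type) (k : nat) (Q : finType) : Type := mkRA {
  q_init : Q;
  final : pred Q;
  tau_init : 'I_k -> tsym D;
  trans_set : seq (trans k Q)
}.

Definition is_original_trans k (Q : Type) (t : trans k Q) : bool :=
  match t with TEq _ _ _ _ | TNew _ _ _ _ => true | _ => false end.

Definition original D k (Q : finType) (A : RA D k Q) : Prop :=
  all (@is_original_trans k Q) (trans_set A).

(* Tape contents for word w: position 0 holds |>, positions 1..size w hold
   the letters, position size w + 1 holds <|. *)
Definition tape_at D (w : seq D) (p : nat) : tsym D :=
  match p with
  | 0 => LEnd
  | p'.+1 => match drop p' w with x :: _ => Sym x | [::] => REnd end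
  end.

Definition move D (w : seq D) (d : dir) (p p' : nat) : Prop :=
  match d with
  | Stay => p' = p
  | Left => p' + 1 = p
  | Right => p' = p + 1 /\ p' <= size w + 1
  end.

Definition upd D k (tau : 'I_k -> tsym D) (i : 'I_k) (a : tsym D) :
  'I_k -> tsym D := fun j => if j == i then a else tau j.

Definition fresh D k (tau : 'I_k -> tsym D) (a : tsym D) : Prop :=
  forall j, tau j <> a.

Definition conf D k (Q : Type) := (Q * nat * ('I_k -> tsym D))%type.

Definition fires D k (Q : Type) (w : seq D) (t : trans k Q)
  (c c' : conf D k Q) : Prop :=
  let: (q, p, tau) := c in
  let: (q', p', tau') := c' in
  let a := tape_at w p in
  match t with
  | TEq i q0 q1 d =>
      q = q0 /\ tau i = a /\ q' = q1 /\ move w d p p' /\ tau' = tau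
  | TNew q0 q1 i d =>
      q = q0 /\ fresh tau a /\ q' = q1 /\ move w d p p' /\ tau' = upd tau i a
  | TEqStore i q0 q1 j d =>
      q = q0 /\ tau i = a /\ q' = q1 /\ move w d p p' /\ tau' = upd tau j a
  | TNewSkip q0 q1 d =>
      q = q0 /\ fresh tau a /\ q' = q1 /\ move w d p p' /\ tau' = tau
  end.

Definition step D k (Q : finType) (A : RA D k Q) (w : seq D)
  (c c' : conf D k Q) : Prop :=
  exists t, List.In t (trans_set A) /\ fires w t c c'.

Definition accepts D k (Q : finType) (A : RA D k Q) (w : seq D) : Prop :=
  exists c : conf D k Q,
    clos_refl_trans (conf D k Q) (step A w) (q_init A, 1, tau_init A) c
    /\ final A c.1.1.

(* A modified automaton with k registers is simulated by an original one with
   k + 1 registers that always hold pairwise distinct values.  The finite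
   state of the simulator additionally records a layout, i.e. which physical
   register holds the value of each virtual register; storing a value that is
   already present merely relabels the layout.  At most k physical registers
   are in use, so one of them is free to receive a value that is new for the
   virtual registers: either that value is new for all physical registers
   (a type (2) move into the free register) or it sits in an unused one (a
   type (1) move).  The infinite alphabet provides the distinct initial
   values. *)

From Stdlib Require Import List Relations.
From mathcomp Require Import all_boot boolp.

Set Implicit Arguments.
Unset Strict Implicit.
Unset Printing Implicit Defensive.

Lemma In_mem (T : eqType) (x : T) (s : seq T) : x \in s -> In x s.
Proof.
by elim: s => //= y s IHs; rewrite in_cons => /orP [/eqP ->|/IHs]; auto.
Qed.

Lemma all_In (T : Type) (P : pred T) (s : seq T) :
  (forall x, In x s -> P x) -> all P s.
Proof. by elim: s => //= x s IHs Ps; rewrite Ps /=; auto. Qed.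

Lemma codom_not_full (aT rT : finType) (f : aT -> rT) :
  #|aT| < #|rT| -> exists r, r \notin codom f.
Proof.
move=> lt_aT_rT; apply/existsP; apply: contraLR lt_aT_rT.
rewrite negb_exists -leqNgt => /forallP codom_full.
rewrite -(size_codom f) (leq_trans _ (card_size _)) //.
by apply: subset_leq_card; apply/subsetP => r _; rewrite -[_ \in _]negbK.
Qed.

Lemma clos_rt_simulation (A B : Type) (stepA : relation A) (stepB : relation B)
    (R : A -> B -> Prop) :
  (forall a a' b, stepA a a' -> R a b -> exists2 b', stepB b b' & R a' b') ->
  forall a a', clos_refl_trans A stepA a a' ->
  forall b, R a b -> exists2 b', clos_refl_trans B stepB b b' & R a' b'.
Proof.
move=> sim a a'; elim=> {a a'} [a a' /sim sim_a|a|a a' a'' _ IH1 _ IH2] b Rab.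
- by have [b' ? ?] := sim_a b Rab; exists b'; first exact: rt_step.
- by exists b; first exact: rt_refl.
- have [b' ? /IH2 [b'' ? ?]] := IH1 b Rab.
  by exists b''; first exact: (rt_trans _ _ b b').
Qed.

Section Semantics.
Variables (D : Type) (k : nat) (Q : Type).

Definition src (t : trans k Q) : Q :=
  match t with
  | TEq _ q _ _ | TNew q _ _ _ | TEqStore _ q _ _ _ | TNewSkip q _ _ => q
  end.

Definition dst (t : trans k Q) : Q :=
  match t with
  | TEq _ _ q _ | TNew _ q _ _ | TEqStore _ _ q _ _ | TNewSkip _ q _ => q
  end.

Definition tdir (t : trans k Q) : dir :=
  match t with
  | TEq _ _ _ d | TNew _ _ _ d | TEqStore _ _ _ _ d | TNewSkip _ _ d => d
  end.

Definition guard (t : trans k Q) : option 'I_k :=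
  match t with TEq i _ _ _ | TEqStore i _ _ _ _ => Some i | _ => None end.

Definition store (t : trans k Q) : option 'I_k :=
  match t with TNew _ _ j _ | TEqStore _ _ _ j _ => Some j | _ => None end.

Definition guard_holds (g : option 'I_k) (tau : 'I_k -> tsym D) a : Prop :=
  if g is Some i then tau i = a else fresh tau a.

Definition store_upd (st : option 'I_k) (tau : 'I_k -> tsym D) a :=
  if st is Some j then upd tau j a else tau.

Lemma firesE (w : seq D) (t : trans k Q) q p tau q' p' tau' :
  fires w t (q, p, tau) (q', p', tau') <->
  [/\ q = src t, guard_holds (guard t) tau (tape_at w p), q' = dst t,
      move w (tdir t) p p' & tau' = store_upd (store t) tau (tape_at w p)].
Proof.
by case: t => * /=; split=> [[-> [? [-> [? ->]]]]|[-> ? -> ? ->]].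
Qed.

End Semantics.

Lemma accepts_bisim D k1 k2 (Q1 Q2 : finType)
    (A1 : RA D k1 Q1) (A2 : RA D k2 Q2) (w : seq D)
    (R : conf D k1 Q1 -> conf D k2 Q2 -> Prop) :
  R (q_init A1, 1, tau_init A1) (q_init A2, 1, tau_init A2) ->
  (forall c1 c2, R c1 c2 -> final A1 c1.1.1 = final A2 c2.1.1) ->
  (forall c1 c1' c2, step A1 w c1 c1' -> R c1 c2 ->
     exists2 c2', step A2 w c2 c2' & R c1' c2') ->
  (forall c2 c2' c1, step A2 w c2 c2' -> R c1 c2 ->
     exists2 c1', step A1 w c1 c1' & R c1' c2') ->
  accepts A1 w <-> accepts A2 w.
Proof.
move=> R_init R_final fwd bwd; split=> -[c [reach_c final_c]].
- have [c' ? /R_final Ec] := clos_rt_simulation fwd reach_c R_init.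
  by exists c'; rewrite -Ec.
- have [c' ? /R_final Ec] :=
    clos_rt_simulation (R := fun c2 c1 => R c1 c2) bwd reach_c R_init.
  by exists c'; rewrite Ec.
Qed.

Lemma upd_at D n (tau : 'I_n -> tsym D) i a : upd tau i a i = a.
Proof. by rewrite /upd eqxx. Qed.

Lemma upd_inj D n (tau : 'I_n -> tsym D) i a :
  injective tau -> fresh tau a -> injective (upd tau i a).
Proof.
move=> tau_inj fresh_a x y; rewrite /upd.
case: eqP => [->|_]; case: eqP => [->|_] // E.
- by case: (fresh_a y); rewrite E.
- by case: (fresh_a x).
- exact: tau_inj.
Qed.

Section Layout.
Variables (D : Type) (k : nat).

Definition layout := {ffun 'I_k -> 'I_k.+1}.

Definition relabel (st : option 'I_k) (s : layout) (r : 'I_k.+1) : layout :=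
  if st is Some j then [ffun l => if l == j then r else s l] else s.

Variables (ta : 'I_k.+1 -> tsym D) (s : layout) (tb : 'I_k -> tsym D).
Hypothesis tbE : tb =1 ta \o s.

Lemma store_upd_relabel st r a :
  ta r = a -> store_upd st tb a =1 ta \o relabel st s r.
Proof.
by move=> <-; case: st => [j|] l //=; rewrite /upd ffunE; case: eqP.
Qed.

Lemma layout_upd_unused r a : r \notin codom s -> tb =1 upd ta r a \o s.
Proof.
by move=> r_unused l; rewrite tbE /= /upd ifN // (memPn r_unused) ?codom_f.
Qed.

Lemma fresh_layoutP a : injective ta ->
  fresh tb a <-> fresh ta a \/ exists2 r, r \notin codom s & ta r = a.
Proof.
move=> ta_inj; split=> [fresh_a|[fresh_a l|[r r_unused ra] l]].
- have [[r ra]|no_r] := pselect (exists r, ta r = a); last first.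
    by left=> r ra; apply: no_r; exists r.
  right; exists r => //; apply/codomP=> -[l rE].
  by apply: (fresh_a l); rewrite tbE /= -rE.
- by rewrite tbE; apply: fresh_a.
- rewrite tbE /= -ra => /ta_inj sl_r.
  by move: r_unused; rewrite -sl_r codom_f.
Qed.

End Layout.

Section Simulation.
Variables (D : Type) (k : nat) (Q : finType) (B : RA D k Q).

Definition sim_state : finType := (Q * layout k)%type.

Definition sim_trans (t : trans k Q) (s : layout k) (r : 'I_k.+1) :
    seq (trans k.+1 sim_state) :=
  let target r := (dst t, relabel (store t) s r) : sim_state in
  match guard t with
  | Some i => [:: TEq (s i) (src t, s) (target (s i)) (tdir t)]
  | None => if r \notin codom s then
              [:: TNew (src t, s) (target r) r (tdir t);
                  TEq r (src t, s) (target r) (tdir t)]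
            else [::]
  end.

Definition sim_trans_set : seq (trans k.+1 sim_state) :=
  flat_map (fun t => flat_map (fun s => flat_map (sim_trans t s)
    (enum 'I_k.+1)) (enum (layout k))) (trans_set B).

Definition simRA (tau0 : 'I_k.+1 -> tsym D) (s0 : layout k) :
    RA D k.+1 sim_state :=
  mkRA (q_init B, s0) (fun qs => final B qs.1) tau0 sim_trans_set.

Lemma In_sim_trans_set tA :
  In tA sim_trans_set <->
  exists t s r, In t (trans_set B) /\ In tA (sim_trans t s r).
Proof.
split=> [/in_flat_map [t [tB /in_flat_map [s [_ /in_flat_map [r [_ tAt]]]]]]|].
  by exists t, s, r.
move=> [t [s [r [tB tAt]]]]; apply/in_flat_map; exists t; split=> //.
apply/in_flat_map; exists s; split; first by apply: In_mem; rewrite mem_enum.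
by apply/in_flat_map; exists r; split; first by apply: In_mem; rewrite mem_enum.
Qed.

Lemma simRA_original tau0 s0 : original (simRA tau0 s0).
Proof.
apply: all_In => tA /In_sim_trans_set [t [s [r [_]]]].
rewrite /sim_trans; case: (guard t) => [i [<-|[]]|] //.
by case: ifP => // _ [<-|[<-|[]]].
Qed.

Definition represents (cB : conf D k Q) (cA : conf D k.+1 sim_state) : Prop :=
  let: (q, p, tb) := cB in
  let: (qs, p', ta) := cA in
  [/\ qs.1 = q, p' = p, injective ta & tb =1 ta \o qs.2].

Variables (tau0 : 'I_k.+1 -> tsym D) (s0 : layout k) (w : seq D).

Lemma sim_step t s r tA c c' :
  In t (trans_set B) -> In tA (sim_trans t s r) -> fires w tA c c' ->
  step (simRA tau0 s0) w c c'.
Proof.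
by move=> tB tAt; exists tA; split=> //; apply/In_sim_trans_set; exists t, s, r.
Qed.

Lemma represents_step_fwd cB cB' cA :
  step B w cB cB' -> represents cB cA ->
  exists2 cA', step (simRA tau0 s0) w cA cA' & represents cB' cA'.
Proof.
case: cB cB' cA => [[q p] tb] [[q' p'] tb'] [[[q0 s] p0] ta].
move=> [t [tB /firesE [-> guard_t -> move_p ->]]] [/= -> -> ta_inj tbE].
case guard_tE: (guard t) guard_t => [i|] /= guard_t.
  have ra : ta (s i) = tape_at w p by rewrite -guard_t tbE.
  exists (dst t, relabel (store t) s (s i), p', ta).
    apply: (sim_step (s := s) (r := ord0) tB).
      by rewrite /sim_trans guard_tE; left.
    exact/firesE.
  by split=> //=; apply: store_upd_relabel ra.
have [fresh_ta|[r r_unused ra]] := (fresh_layoutP tbE _ ta_inj).1 guard_t.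
  have [r r_unused] : exists r, r \notin codom s.
    by apply: codom_not_full; rewrite !card_ord.
  exists (dst t, relabel (store t) s r, p', upd ta r (tape_at w p)).
    apply: (sim_step (s := s) (r := r) tB).
      by rewrite /sim_trans guard_tE r_unused; left.
    exact/firesE.
  split=> //=; first exact: upd_inj.
  apply: store_upd_relabel (layout_upd_unused tbE _ r_unused) _ _ _ _.
  exact: upd_at.
exists (dst t, relabel (store t) s r, p', ta).
  apply: (sim_step (s := s) (r := r) tB).
    by rewrite /sim_trans guard_tE r_unused; right; left.
  exact/firesE.
by split=> //=; apply: store_upd_relabel ra.
Qed.

Lemma represents_step_bwd cA cA' cB :
  step (simRA tau0 s0) w cA cA' -> represents cB cA ->
  exists2 cB', step B w cB cB' & represents cB' cA'.
Proof.
case: cB cA cA' => [[q p] tb] [[[q0 s] p0] ta] [[qs' p'] ta'].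
move=> [tA [/In_sim_trans_set [t [s1 [r [tB tAt]]]] fires_tA]].
move=> [/= q0E p0E ta_inj tbE]; subst q0 p0.
have B_step : guard_holds (guard t) tb (tape_at w p) -> src t = q ->
    move w (tdir t) p p' ->
    step B w (q, p, tb) (dst t, p', store_upd (store t) tb (tape_at w p)).
  by move=> guard_t <- move_p; exists t; split=> //; apply/firesE.
move: tAt fires_tA; rewrite /sim_trans.
case guard_tE: (guard t) B_step => [i|] B_step.
  case=> [<-|[]] /firesE /= [[qE s1E] ra -> move_p ->]; subst q s1.
  exists (dst t, p', store_upd (store t) tb (tape_at w p)).
    by apply: B_step => //=; rewrite tbE.
  by split=> //=; apply: store_upd_relabel ra.
case: ifP => // r_unused [<-|[<-|[]]];
  move=> /firesE /= [[qE s1E] guard_A -> move_p ->]; subst q s1;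
  exists (dst t, p', store_upd (store t) tb (tape_at w p)).
- by apply: B_step => //; apply/(fresh_layoutP tbE _ ta_inj); left.
- split=> //=; first exact: upd_inj.
  apply: store_upd_relabel (layout_upd_unused tbE _ r_unused) _ _ _ _.
  exact: upd_at.
- by apply: B_step => //; apply/(fresh_layoutP tbE _ ta_inj); right; exists r.
- by split=> //=; apply: store_upd_relabel guard_A.
Qed.

Lemma simRA_accepts :
  injective tau0 -> tau_init B =1 tau0 \o s0 ->
  accepts (simRA tau0 s0) w <-> accepts B w.
Proof.
move=> tau0_inj tau_initE; symmetry.
apply: (accepts_bisim (R := represents)).
- by split.
- by case=> [[q p] tb] [[[q' s] p'] ta] [/= -> _ _ _].
- exact: represents_step_fwd.
- exact: represents_step_bwd.
Qed.

End Simulation.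

Section InitialLayout.
Variables (D : Type) (HD : infinite_alphabet D).

Local Notation csym := {classic (tsym D)}.

Lemma exists_letter_notin (s : seq csym) :
  exists x : D, (Sym x : csym) \notin s.
Proof.
have [x0 _] := HD (fun i : 'I_0 => ltac:(by case: i)).
pose letter (a : tsym D) := if a is Sym x then x else x0.
have [x x_new] := HD (fun i : 'I_(size s) => letter (nth (LEnd : csym) s i)).
exists x; apply/negP => x_in_s.
have index_lt : index (Sym x : csym) s < size s by rewrite index_mem.
by apply: (x_new (Ordinal index_lt)); rewrite /= nth_index.
Qed.

Lemma uniq_extend (s : seq csym) m :
  uniq s -> exists u : seq csym, size u = m /\ uniq (s ++ u).
Proof.
move=> s_uniq; elim: m => [|m [u [size_u su_uniq]]].
  by exists [::]; rewrite cats0.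
have [x x_new] := exists_letter_notin (s ++ u).
exists (rcons u (Sym x)); rewrite size_rcons size_u -rcons_cat rcons_uniq.
by rewrite x_new su_uniq.
Qed.

(* The distinct values of [tau] come first, followed by fresh letters. *)
Lemma initial_layout k (tau : 'I_k -> tsym D) :
  exists (tau0 : 'I_k.+1 -> tsym D) (s0 : layout k),
    injective tau0 /\ tau =1 tau0 \o s0.
Proof.
pose vals : seq csym := undup [seq tau l : csym | l <- enum 'I_k].
have size_vals : size vals <= k.
  by rewrite (leq_trans (size_undup _)) // size_map size_enum_ord.
have [u [size_u vu_uniq]] := uniq_extend k.+1 (undup_uniq _ : uniq vals).
have size_vu : k.+1 <= size (vals ++ u) by rewrite size_cat size_u leq_addl.
exists (fun r => nth (LEnd : csym) (vals ++ u) r).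
exists [ffun l => inord (index (tau l : csym) vals)]; split.
  move=> x y E; apply/val_inj/eqP.
  by rewrite -(@nth_uniq csym LEnd (vals ++ u))
    ?(leq_trans (ltn_ord _) size_vu) //; apply/eqP.
move=> l /=; rewrite ffunE.
have tau_l_in : (tau l : csym) \in vals.
  by rewrite mem_undup; apply: map_f; rewrite mem_enum.
have index_lt : index (tau l : csym) vals < size vals by rewrite index_mem.
rewrite inordK; last exact: leq_trans index_lt (leqW size_vals).
by rewrite nth_cat index_lt nth_index.
Qed.

End InitialLayout.

Theorem lemma1 (D : Type) (HD : infinite_alphabet D) (L : seq D -> Prop) :
  (exists (k : nat) (Q : finType) (A : RA D k Q),
      original A /\ forall w, L w <-> accepts A w)
  <->
  (exists (k' : nat) (Q : finType) (B : RA D k' Q),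
      forall w, L w <-> accepts B w).
Proof.
split=> [[k [Q [A [_ L_A]]]]|[k [Q [B L_B]]]]; first by exists k, Q, A.
have [tau0 [s0 [tau0_inj tau_initE]]] := initial_layout HD (tau_init B).
exists k.+1, (sim_state k Q), (simRA B tau0 s0); split.
  exact: simRA_original.
by move=> w; rewrite L_B simRA_accepts.
Qed.
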